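(* Let $Y\subseteq R^n$ be a definable set and $\mathcal C$ a special linear decomposition of $Y$. Then for every box $B_1\subseteq R^n$ there is a box $B\supseteq B_1$ such that the collection $\mathcal D=\{B\cap D: D\in\mathcal C\}\setminus\{\emptyset\}$ is a special linear decomposition of $B\cap Y$.
   Context: Throughout, $\mathcal R=\langle R,<,+,0,\{x\mapsto\lambda x\}_{\lambda\in\Lambda}\rangle$ is an ordered vector space over an ordered division ring $\Lambda$; ''definable'' means definable in $\mathcal R$ with parameters. $R^n$ carries the product of the order topology, $cl$ denotes closure, $\pi:R^n\to R^{n-1}$ is the projection onto the first $n-1$ coordinates, $R^0=\{0\}$. A box is a set $(a_1,b_1)\times\dots\times(a_n,b_n)$ with $a_i<b_i$ in $R$. Linear maps: a linear (affine) map $R^m\to R$ is $x\mapsto\lambda_1x_1+\dots+\lambda_mx_m+a$ with $\lambda_i\in\Lambda$, $a\in R$. For $X\subseteq R^{m}$ and $f,g$ each either a linear map or one of the constant functions $\pm\infty$, with $f<g$ on $X$, put $(f,g)_X=\{(x,y)\in X\times R: f(x)<y<g(x)\}$ and let $\Gamma(f)_X$ be the graph of $f$ restricted to $X$; values at points outside $X$ are those of the linear map. Linear cells: $C\subseteq R$ is a linear cell if it is a singleton or an open interval with endpoints in $R\cup\{\pm\infty\}$; for $n>1$, $C\subseteq R^n$ is a linear cell if $C=\Gamma(f)_X$ with $f$ linear, or $C=(f,g)_X$ with $f,g$ linear or $\pm\infty$, $f<g$ on $X$, where $X\subseteq R^{n-1}$ is a linear cell. Linear decompositions: a linear decomposition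 of $R$ is a finite partition of $R$ into linear cells; for $n>1$ a linear decomposition of $R^n$ is a finite partition $\mathcal C$ of $R^n$ into linear cells such that $\pi(\mathcal C)=\{\pi(D):D\in\mathcal C\}$ is a linear decomposition of $R^{n-1}$. For definable $Y\subseteq R^n$, a linear decomposition of $Y$ is $\{D\cap Y: D\in\mathcal C\}\setminus\{\emptyset\}$ for a linear decomposition $\mathcal C$ of $R^n$ each of whose members is contained in or disjoint from $Y$. Special linear decompositions are defined recursively: every linear decomposition of a subset of $R$ is special; for $n>1$ a linear decomposition $\mathcal C$ of $Y\subseteq R^n$ is special if (1) $\pi(\mathcal C)$ is a special linear decomposition of $\pi(Y)$; (2) for every two cells $\Gamma(f)_S,\Gamma(g)_T\in\mathcal C$ and every $V\in\pi(\mathcal C)$, one has $f<g$ on $V$, or $f=g$ on $V$, or $f>g$ on $V$; (3) for every two cells $\Gamma(h)_S,(f,g)_T\in\mathcal C$ there is no $c\in cl(S)\cap cl(T)$ with $f(c)<h(c)<g(c)$. *)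

From Stdlib Require Import List.
From HB Require Import structures.
From mathcomp Require Import all_boot all_order all_algebra.
Set Implicit Arguments. Unset Strict Implicit. Unset Printing Implicit Defensive.
Import Order.TTheory GRing.Theory Num.Theory.
Local Open Scope ring_scope.

(** Ordered division ring: a unit ring Λ in which every nonzero element is
    invertible, with a positive cone posL (x < y :<-> posL (y - x)). *)
Definition ordered_division_ring (L : unitRingType) (posL : pred L) : Prop :=
  [/\ forall x : L, x != 0 -> x \is a GRing.unit,
      forall x y : L, posL x -> posL y -> posL (x + y),
      forall x y : L, posL x -> posL y -> posL (x * y),
      forall x : L, x = 0 \/ posL x \/ posL (- x) &
      forall x : L, ~ (posL x /\ posL (- x))].

Definition ordered_vspace (L : unitRingType) (posL : pred L)
    (R : lmodType L) (posR : pred R) : Prop :=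
  [/\ forall x y : R, posR x -> posR y -> posR (x + y),
      forall x : R, x = 0 \/ posR x \/ posR (- x),
      forall x : R, ~ (posR x /\ posR (- x)) &
      forall (l : L) (x : R), posL l -> posR x -> posR (l *: x)].

Inductive ext (T : Type) := NInf | Fin of T | PInf.
Arguments NInf {T}.
Arguments PInf {T}.
Arguments Fin {T} _.

Inductive cell1 (T : Type) := C1Pt of T | C1Int of ext T & ext T.

(** linear (affine) maps R^m -> R : coefficients λ_i and constant a *)
Definition lin (L : unitRingType) (R : lmodType L) (m : nat) :=
  ('rV[L]_m * R)%type.

Inductive shape (L : unitRingType) (R : lmodType L) (m : nat) :=
  | SGraph of lin R m
  | SBand of ext (lin R m) & ext (lin R m).

(** cdesc R n : descriptions of linear cells in R^(n+1) *)
Fixpoint cdesc (L : unitRingType) (R : lmodType L) (n : nat) : Type :=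
  match n with
  | 0 => cell1 R
  | k.+1 => (cdesc R k * shape R k.+1)%type
  end.

Section OVS.
Variable L : unitRingType.
Variable R : lmodType L.
Variable posR : pred R.

Definition ltR (x y : R) : Prop := posR (y - x).

Definition ltE (a b : ext R) : Prop :=
  match a, b with
  | NInf, NInf => False
  | NInf, _ => True
  | Fin x, Fin y => ltR x y
  | Fin _, PInf => True
  | Fin _, NInf => False
  | PInf, _ => False
  end.

Definition projv n (x : 'rV[R]_n.+1) : 'rV[R]_n :=
  \row_(i < n) x 0 (widen_ord (leqnSn n) i).
Definition lastc n (x : 'rV[R]_n.+1) : R := x 0 ord_max.

Definition evl m (f : lin R m) (x : 'rV[R]_m) : R :=
  \sum_(i < m) f.1 0 i *: x 0 i + f.2.

Definition evx m (f : ext (lin R m)) (x : 'rV[R]_m) : ext R :=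
  match f with NInf => NInf | Fin g => Fin (evl g x) | PInf => PInf end.

Fixpoint csem n : cdesc R n -> 'rV[R]_n.+1 -> Prop :=
  match n return cdesc R n -> 'rV[R]_n.+1 -> Prop with
  | 0 => fun c x =>
      match c with
      | C1Pt a => x 0 0 = a
      | C1Int a b => ltE a (Fin (x 0 0)) /\ ltE (Fin (x 0 0)) b
      end
  | k.+1 => fun c x =>
      csem c.1 (projv x) /\
      match c.2 with
      | SGraph f => lastc x = evl f (projv x)
      | SBand f g => ltE (evx f (projv x)) (Fin (lastc x)) /\
                     ltE (Fin (lastc x)) (evx g (projv x))
      end
  end.

Fixpoint cvalid n : cdesc R n -> Prop :=
  match n return cdesc R n -> Prop with
  | 0 => fun c => match c with C1Pt _ => True | C1Int a b => ltE a b end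
  | k.+1 => fun c =>
      cvalid c.1 /\
      match c.2 with
      | SGraph _ => True
      | SBand f g => forall x, csem c.1 x -> ltE (evx f x) (evx g x)
      end
  end.

Definition cells_partition n (cs : seq (cdesc R n)) : Prop :=
  [/\ forall c, In c cs -> cvalid c,
      forall x, exists c, In c cs /\ csem c x &
      forall c1 c2 x, In c1 cs -> In c2 cs -> csem c1 x -> csem c2 x ->
        forall y, csem c1 y <-> csem c2 y].

(** linear decomposition of R^(n+1); π(C) is the list of base cells *)
Fixpoint lindec n : seq (cdesc R n) -> Prop :=
  match n return seq (cdesc R n) -> Prop with
  | 0 => fun cs => cells_partition cs
  | k.+1 => fun cs =>
      cells_partition cs /\ lindec (map (fun c : cdesc R k.+1 => c.1) cs)
  end.

Definition lindec_of n (cs : seq (cdesc R n)) (Y : 'rV[R]_n.+1 -> Prop) : Prop :=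
  exists cs' : seq (cdesc R n),
    [/\ lindec cs',
        forall c', In c' cs' ->
          (forall x, csem c' x -> Y x) \/ (forall x, csem c' x -> ~ Y x),
        forall c, In c cs ->
          [/\ In c cs', exists x, csem c x & forall x, csem c x -> Y x] &
        forall c', In c' cs' -> (exists x, csem c' x /\ Y x) -> In c' cs].

Definition projset n (Y : 'rV[R]_n.+1 -> Prop) : 'rV[R]_n -> Prop :=
  fun z => exists x, Y x /\ projv x = z.

(** closure in the product of the order topology (basic opens: products of
    open intervals/rays with endpoints in R ∪ {±∞}) *)
Definition closure m (S : 'rV[R]_m -> Prop) (x : 'rV[R]_m) : Prop :=
  forall a b : 'I_m -> ext R,
    (forall i, ltE (a i) (Fin (x 0 i)) /\ ltE (Fin (x 0 i)) (b i)) ->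
    exists y, S y /\ forall i, ltE (a i) (Fin (y 0 i)) /\ ltE (Fin (y 0 i)) (b i).

Definition special_cond2 k (cs : seq (cdesc R k.+1)) : Prop :=
  forall (c1 c2 c3 : cdesc R k.+1) (f g : lin R k.+1),
    In c1 cs -> In c2 cs -> In c3 cs ->
    c1.2 = SGraph f -> c2.2 = SGraph g ->
    (forall x, csem c3.1 x -> ltR (evl f x) (evl g x)) \/
    (forall x, csem c3.1 x -> evl f x = evl g x) \/
    (forall x, csem c3.1 x -> ltR (evl g x) (evl f x)).

Definition special_cond3 k (cs : seq (cdesc R k.+1)) : Prop :=
  forall (c1 c2 : cdesc R k.+1) (h : lin R k.+1) (f g : ext (lin R k.+1)),
    In c1 cs -> In c2 cs ->
    c1.2 = SGraph h -> c2.2 = SBand f g ->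
    ~ exists x, [/\ closure (csem c1.1) x, closure (csem c2.1) x,
                   ltE (evx f x) (Fin (evl h x)) & ltE (Fin (evl h x)) (evx g x)].

Fixpoint special n : seq (cdesc R n) -> ('rV[R]_n.+1 -> Prop) -> Prop :=
  match n return seq (cdesc R n) -> ('rV[R]_n.+1 -> Prop) -> Prop with
  | 0 => fun cs Y => lindec_of cs Y
  | k.+1 => fun cs Y =>
      [/\ lindec_of cs Y,
          special (map (fun c : cdesc R k.+1 => c.1) cs) (projset Y),
          special_cond2 cs & special_cond3 cs]
  end.

Definition is_box n (a b : 'rV[R]_n) : Prop := forall i, ltR (a 0 i) (b 0 i).
Definition box n (a b : 'rV[R]_n) (x : 'rV[R]_n) : Prop :=
  forall i, ltR (a 0 i) (x 0 i) /\ ltR (x 0 i) (b 0 i).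

End OVS.

(* Enlarge [B1], one coordinate at a time, to a box [B] such that over the
   projection of [B] every linear boundary function of every cell of the ambient
   decomposition of [R^n] lies strictly between the last-coordinate bounds of
   [B]; a box this large exists because a linear map is bounded on a box.
   Then [B ∩ D] is again a linear cell, obtained by replacing the infinite
   boundaries of bands by these bounds.  Adding cells that decompose the
   complement of [B] (cylinders over the outer cells of the base, and the slabs
   below, at, and above the two bounds over the cut cells of the base) yields a
   linear decomposition of [R^n], so [B ∩ C] is a linear decomposition of
   [B ∩ Y].  Conditions (2) and (3) survive: graphs are unchanged, bases only
   shrink, and band boundaries only get larger below and smaller above. *)

From Pilot Require Import Defs.
From Stdlib Require Import List ClassicalEpsilon.
From HB Require Import structures.
From mathcomp Require Import all_boot all_order all_algebra.
Import GRing.Theory.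
Set Implicit Arguments. Unset Strict Implicit. Unset Printing Implicit Defensive.
Local Open Scope ring_scope.

Section BoxCut.
Variable L : unitRingType.
Variable posL : pred L.
Variable R : lmodType L.
Variable posR : pred R.
Hypothesis HL : ordered_division_ring posL.
Hypothesis HR : ordered_vspace posL posR.

Local Notation ltR := (ltR posR).
Local Notation ltE := (ltE posR).
Local Notation csem := (csem posR).
Local Notation cvalid := (cvalid posR).
Local Notation box := (box posR).
Local Notation is_box := (is_box posR).
Local Notation cells_partition := (cells_partition posR).
Local Notation lindec := (lindec posR).
Local Notation special := (special posR).
Local Notation special_cond2 := (special_cond2 posR).
Local Notation special_cond3 := (special_cond3 posR).
Local Notation evx := (evx (R:=R)).
(* [projv], [shape] and [closure] are also names of MathComp constants. *)
Local Notation projv := Defs.projv.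
Local Notation shape := Defs.shape.
Local Notation closure := (Defs.closure posR).

(** * Ordered vector spaces *)

Definition leR (x y : R) := x = y \/ ltR x y.

Lemma posR_add x y : posR x -> posR y -> posR (x + y).
Proof. by case: HR => H _ _ _; apply: H. Qed.
Lemma posR_total x : x = 0 \/ posR x \/ posR (- x).
Proof. by case: HR => _ H _ _; apply: H. Qed.
Lemma posR_anti x : posR x -> posR (- x) -> False.
Proof. by case: HR => _ _ H _ ? ?; apply: (H x). Qed.
Lemma posR_scale l x : posL l -> posR x -> posR (l *: x).
Proof. by case: HR => _ _ _ H; apply: H. Qed.

Lemma ltR_irr x : ~ ltR x x.
Proof. by rewrite /Defs.ltR subrr => H; apply: (posR_anti H); rewrite oppr0. Qed.
Lemma ltR_trans x y z : ltR x y -> ltR y z -> ltR x z.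
Proof. by rewrite /Defs.ltR => H1 H2; have := posR_add H2 H1; rewrite addrA subrK. Qed.
Lemma ltR_asym x y : ltR x y -> ltR y x -> False.
Proof. by move=> H1 H2; apply: (ltR_irr (ltR_trans H1 H2)). Qed.
Lemma ltR_cycle3 x y z : ltR x y -> ltR y z -> ltR z x -> False.
Proof. by move=> H1 H2; apply: ltR_asym (ltR_trans H1 H2). Qed.
Lemma ltR_total x y : x = y \/ ltR x y \/ ltR y x.
Proof.
rewrite /Defs.ltR; case: (posR_total (y - x)) => [/eqP|[H|H]].
- by rewrite subr_eq0 => /eqP ->; left.
- by right; left.
- by right; right; rewrite opprB in H.
Qed.
Lemma ltR_add x y z w : ltR x y -> ltR z w -> ltR (x + z) (y + w).
Proof. by rewrite /Defs.ltR => H1 H2; have := posR_add H1 H2; rewrite opprD addrACA. Qed.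
Lemma ltR_addr x y z : ltR x y -> ltR (x + z) (y + z).
Proof. by rewrite /Defs.ltR opprD addrACA subrr addr0. Qed.

Lemma leR_refl x : leR x x. Proof. by left. Qed.
Lemma leR_ltR_trans x y z : leR x y -> ltR y z -> ltR x z.
Proof. by case=> [->//|H1 H2]; apply: ltR_trans H1 H2. Qed.
Lemma ltR_leR_trans x y z : ltR x y -> leR y z -> ltR x z.
Proof. by move=> H1 [<-//|H2]; apply: ltR_trans H1 H2. Qed.
Lemma leR_trans x y z : leR x y -> leR y z -> leR x z.
Proof. by case=> [->//|H1] H2; right; apply: ltR_leR_trans H1 H2. Qed.
Lemma leR_add x y z w : leR x y -> leR z w -> leR (x + z) (y + w).
Proof.
case=> [->|H1]; case=> [->|H2]; first by left.
- by right; rewrite ![y + _]addrC; apply: ltR_addr.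
- by right; apply: ltR_addr.
- by right; apply: ltR_add.
Qed.
Lemma leR_sum m (F G : 'I_m -> R) :
  (forall i, leR (F i) (G i)) -> leR (\sum_i F i) (\sum_i G i).
Proof.
move=> H; elim/big_rec2: _ => [|i y1 y2 _ Hy]; first exact: leR_refl.
exact: leR_add.
Qed.
Lemma exists_leR_ub x y : exists m, leR x m /\ leR y m.
Proof.
case: (ltR_total x y) => [->|[H|H]]; first by exists y; split; left.
- by exists y; split; [right|left].
- by exists x; split; [left|right].
Qed.
Lemma exists_leR_lb x y : exists m, leR m x /\ leR m y.
Proof.
case: (ltR_total x y) => [->|[H|H]]; first by exists y; split; left.
- by exists x; split; [left|right].
- by exists y; split; [right|left].
Qed.
Lemma ltR_subr_pos x y e : leR x y -> posR e -> ltR (x - e) y.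
Proof. by move=> H He; apply: ltR_leR_trans H; rewrite /Defs.ltR opprB addrC subrK. Qed.
Lemma ltR_addr_pos x y e : leR y x -> posR e -> ltR y (x + e).
Proof. by move=> H He; apply: leR_ltR_trans H _; rewrite /Defs.ltR [x + e]addrC addrK. Qed.

Lemma posL_add x y : posL x -> posL y -> posL (x + y).
Proof. by case: HL => _ H _ _ _; apply: H. Qed.
Lemma posL_mul x y : posL x -> posL y -> posL (x * y).
Proof. by case: HL => _ _ H _ _; apply: H. Qed.
Lemma posL_total x : x = 0 \/ posL x \/ posL (- x).
Proof. by case: HL => _ _ _ H _; apply: H. Qed.
Lemma posL_anti x : posL x -> posL (- x) -> False.
Proof. by case: HL => _ _ _ _ H ? ?; apply: (H x). Qed.
Lemma posL_unit (x : L) : posL x -> x \is a GRing.unit.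
Proof.
move=> Hx; case: HL => H _ _ _ _; apply: H; apply/eqP => E.
by subst; apply: (posL_anti Hx); rewrite oppr0.
Qed.
Lemma posL1 : posL 1.
Proof.
case: (posL_total 1) => [/eqP|[//|H]]; first by rewrite oner_eq0.
by have := posL_mul H H; rewrite mulrNN mulr1 => /posL_anti /(_ H).
Qed.

Definition half : L := (1 + 1)^-1.

Lemma posL2 : posL (1 + 1). Proof. exact: posL_add posL1 posL1. Qed.
Lemma half_add_half : half + half = 1.
Proof. by rewrite -{1 2}(mulr1 half) -mulrDr /half mulVr // posL_unit // posL2. Qed.
Lemma posL_half : posL half.
Proof.
have E : half * (1 + 1) = 1 by rewrite mulrDr mulr1 half_add_half.
case: (posL_total half) => [H|[//|H]].
- by move: E; rewrite H mul0r => /eqP; rewrite eq_sym oner_eq0.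
- by have := posL_mul H posL2; rewrite mulNr E => /(posL_anti posL1).
Qed.

Lemma ltR_midpoint x y : ltR x y -> exists t, ltR x t /\ ltR t y.
Proof.
rewrite /Defs.ltR => H; have Hh := posR_scale posL_half H.
exists (x + half *: (y - x)); split; first by rewrite addrC addKr.
suff -> : y - (x + half *: (y - x)) = half *: (y - x) by [].
have E : y - x = half *: (y - x) + half *: (y - x)
  by rewrite -scalerDl half_add_half scale1r.
by rewrite opprD addrA {1}E addrK.
Qed.

Lemma In_map_iff (A B : Type) (f : A -> B) (s : seq A) y :
  In y (map f s) <-> exists x, f x = y /\ In x s.
Proof.
elim: s => [|x s IH] /=; first by split=> [[]|[? [_ []]]].
split.
- case=> [<-|/IH [z [<- H]]]; first by exists x; split; [|left].
  by exists z; split; [|right].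
- case=> z [E [->|H]]; first by left.
  by right; apply/IH; exists z.
Qed.
Lemma In_map (A B : Type) (f : A -> B) (s : seq A) x : In x s -> In (f x) (map f s).
Proof. by move=> H; apply/In_map_iff; exists x. Qed.
Lemma In_filter (A : Type) (p : pred A) (s : seq A) x :
  In x (filter p s) <-> In x s /\ p x.
Proof.
elim: s => [|y s IH] /=; first by split=> [[]|[[]]].
case Py: (p y) => /=.
- split; first by case=> [<-|/IH [? ?]]; [split; [left|]|split; [right|]].
  by case=> [[->|H] Px]; [left|right; apply/IH].
- rewrite IH; split; first by case=> ? ?; split; [right|].
  by case=> [[E|H] Px]; [subst; rewrite Py in Px|].
Qed.
Lemma In_cat (A : Type) (s1 s2 : seq A) x : In x (s1 ++ s2) <-> In x s1 \/ In x s2.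
Proof. by elim: s1 => [|y s IH] /=; [tauto|rewrite IH; tauto]. Qed.
Lemma In_flatten (A : Type) (ss : seq (seq A)) x :
  In x (flatten ss) <-> exists s, In s ss /\ In x s.
Proof.
elim: ss => [|s ss IH] /=; first by split=> [[]|[? [[] _]]].
rewrite In_cat IH; split.
- by case=> [H|[t [H1 H2]]]; [exists s; split; [left|]|exists t; split; [right|]].
- by case=> t [[<-|H1] H2]; [left|right; exists t].
Qed.

Lemma widen_ordP k (i : 'I_k.+2) :
  (exists j : 'I_k.+1, i = widen_ord (leqnSn k.+1) j) \/ i = ord_max.
Proof.
case: (ltnP i k.+1) => H; first by left; exists (Ordinal H); apply: val_inj.
by right; apply: val_inj; apply/eqP; rewrite eqn_leq H -ltnS ltn_ord.
Qed.

Lemma projvE k (x : 'rV[R]_k.+1) (j : 'I_k) : projv x 0 j = x 0 (widen_ord (leqnSn k) j).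
Proof. by rewrite mxE. Qed.

Lemma boxS k (a b x : 'rV[R]_k.+2) :
  box a b x <-> box (projv a) (projv b) (projv x) /\
    ltR (lastc a) (lastc x) /\ ltR (lastc x) (lastc b).
Proof.
split=> [H|[H1 H2] i]; first by split=> [j|]; rewrite ?projvE; apply: H.
by case: (widen_ordP i) => [[j ->]|->] //; have := H1 j; rewrite !projvE.
Qed.

Lemma is_boxS k (a b : 'rV[R]_k.+2) :
  is_box a b <-> is_box (projv a) (projv b) /\ ltR (lastc a) (lastc b).
Proof.
split=> [H|[H1 H2] i]; first by split=> [j|]; rewrite ?projvE; apply: H.
by case: (widen_ordP i) => [[j ->]|->] //; have := H1 j; rewrite !projvE.
Qed.

Lemma box_row1 (a b x : 'rV[R]_1) :
  box a b x <-> ltR (a 0 0) (x 0 0) /\ ltR (x 0 0) (b 0 0).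
Proof. by split=> [H|H i]; [apply: H|rewrite (ord1 i)]. Qed.

Definition rcons_row k (y : 'rV[R]_k.+1) (t : R) : 'rV[R]_k.+2 :=
  \row_(i < k.+2) (if (i < k.+1)%N then y 0 (inord i) else t).

Lemma projv_rcons_row k (y : 'rV[R]_k.+1) t : projv (rcons_row y t) = y.
Proof.
apply/rowP => j; rewrite projvE mxE /= ltn_ord.
by congr (y 0 _); apply: val_inj; rewrite /= inordK.
Qed.
Lemma lastc_rcons_row k (y : 'rV[R]_k.+1) t : lastc (rcons_row y t) = t.
Proof. by rewrite /lastc mxE /= ltnn. Qed.


(** * Cells cut by a box *)

Definition const_lin m (a : R) : lin R m := (0, a).
Lemma evl_const_lin m (a : R) (x : 'rV[R]_m) : evl (const_lin m a) x = a.
Proof. by rewrite /evl big1 ?add0r // => i _; rewrite mxE scale0r. Qed.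

Lemma ltE_trans_fin (u v : ext R) t : ltE u (Fin t) -> ltE (Fin t) v -> ltE u v.
Proof. by case: u => [|u|] //; case: v => [|v|] //=; apply: ltR_trans. Qed.

Definition maxE (a : R) (x : ext R) : ext R :=
  match x with
  | NInf => Fin a | Fin y => if posR (y - a) then Fin y else Fin a | PInf => PInf
  end.
Definition minE (b : R) (y : ext R) : ext R :=
  match y with
  | NInf => NInf | Fin z => if posR (b - z) then Fin z else Fin b | PInf => Fin b
  end.

Lemma ltE_maxE a x z : ltE (maxE a x) (Fin z) <-> ltR a z /\ ltE x (Fin z).
Proof.
case: x => [|y|] /=; try tauto.
case H: (posR (y - a)) => /=; split=> [Hz|[]//]; split=> //; first exact: ltR_trans H Hz.
case: (ltR_total y a) => [->//|[H'|H']]; first exact: ltR_trans H' Hz.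
by rewrite /Defs.ltR H in H'.
Qed.
Lemma ltE_minE b y z : ltE (Fin z) (minE b y) <-> ltR z b /\ ltE (Fin z) y.
Proof.
case: y => [|y|] /=; try tauto.
case H: (posR (b - y)) => /=; split=> [Hz|[]//]; split=> //; first exact: ltR_trans Hz H.
case: (ltR_total y b) => [->//|[H'|H']]; last exact: ltR_trans Hz H'.
by rewrite /Defs.ltR H in H'.
Qed.

Definition lower_cap m (a : R) (f : ext (lin R m)) : ext (lin R m) :=
  if f is NInf then Fin (const_lin m a) else f.
Definition upper_cap m (b : R) (g : ext (lin R m)) : ext (lin R m) :=
  if g is PInf then Fin (const_lin m b) else g.
Definition cut_shape m (a b : R) (s : shape R m) : shape R m :=
  match s with
  | SGraph f => SGraph f
  | SBand f g => SBand (lower_cap a f) (upper_cap b g)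
  end.

(* Describes [c] intersected with the box [(a, b)] only when [c] is
   [cell_within a b]; see [cut_cell_sem]. *)
Fixpoint cut_cell n : 'rV[R]_n.+1 -> 'rV[R]_n.+1 -> cdesc R n -> cdesc R n :=
  match n return 'rV[R]_n.+1 -> 'rV[R]_n.+1 -> cdesc R n -> cdesc R n with
  | 0 => fun a b c =>
      match c with
      | C1Pt p => C1Pt p
      | C1Int x y => C1Int (maxE (a 0 0) x) (minE (b 0 0) y)
      end
  | k.+1 => fun a b c =>
      (cut_cell (projv a) (projv b) c.1, cut_shape (lastc a) (lastc b) c.2)
  end.

Definition shape_sem m (s : shape R m) (z : 'rV[R]_m) (t : R) : Prop :=
  match s with
  | SGraph f => t = evl f z
  | SBand f g => ltE (evx f z) (Fin t) /\ ltE (Fin t) (evx g z)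
  end.

Lemma csemS k (c : cdesc R k.+1) x :
  csem c x <-> csem c.1 (projv x) /\ shape_sem c.2 (projv x) (lastc x).
Proof. by case: c => c1 [f|f g]. Qed.

Lemma cvalidS k (c : cdesc R k.+1) :
  cvalid c <-> cvalid c.1 /\ (forall f g, c.2 = SBand f g ->
      forall x, csem c.1 x -> ltE (evx f x) (evx g x)).
Proof.
case: c => c1 [f|f g] /=; first by split=> [[? _]|[? _]].
by split=> [[H1 H2]|[H1 H2]]; split=> //; [move=> f' g' [<- <-]|apply: H2].
Qed.

Definition lin_within m (pa pb : 'rV[R]_m) (la lb : R) (f : lin R m) :=
  forall x, box pa pb x -> ltR la (evl f x) /\ ltR (evl f x) lb.
Definition elin_within m (pa pb : 'rV[R]_m) (la lb : R) (f : ext (lin R m)) :=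
  if f is Fin g then lin_within pa pb la lb g else True.
Definition shape_within m (pa pb : 'rV[R]_m) (la lb : R) (s : shape R m) :=
  match s with
  | SGraph f => lin_within pa pb la lb f
  | SBand f g => elin_within pa pb la lb f /\ elin_within pa pb la lb g
  end.

Fixpoint cell_within n : 'rV[R]_n.+1 -> 'rV[R]_n.+1 -> cdesc R n -> Prop :=
  match n return 'rV[R]_n.+1 -> 'rV[R]_n.+1 -> cdesc R n -> Prop with
  | 0 => fun _ _ _ => True
  | k.+1 => fun a b c =>
      shape_within (projv a) (projv b) (lastc a) (lastc b) c.2 /\
      cell_within (projv a) (projv b) c.1
  end.

Definition meets_box n (a b : 'rV[R]_n.+1) (c : cdesc R n) :=
  exists x, box a b x /\ csem c x.

Lemma shape_sem_cut m (pa pb : 'rV[R]_m) la lb s z t :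
  shape_within pa pb la lb s -> box pa pb z ->
  shape_sem (cut_shape la lb s) z t <-> (ltR la t /\ ltR t lb) /\ shape_sem s z t.
Proof.
case: s => [f|f g] /= Hs Hz.
- by have [H1 H2] := Hs _ Hz; split=> [->|[]].
- case: Hs => Hf Hg.
  have Ef : ltE (evx (lower_cap la f) z) (Fin t) <-> ltR la t /\ ltE (evx f z) (Fin t).
    case: f Hf => [|f|] /= Hf; rewrite ?evl_const_lin; try tauto.
    have [H1 _] := Hf _ Hz; split=> [H|[]//]; split=> //; exact: ltR_trans H1 H.
  have Eg : ltE (Fin t) (evx (upper_cap lb g) z) <-> ltR t lb /\ ltE (Fin t) (evx g z).
    case: g Hg => [|g|] /= Hg; rewrite ?evl_const_lin; try tauto.
    have [_ H1] := Hg _ Hz; split=> [H|[]//]; split=> //; exact: ltR_trans H H1.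
  rewrite -/(ltE (Fin t) (evx g z)) -/(ltE (Fin t) (evx (upper_cap lb g) z)) Ef Eg.
  tauto.
Qed.

Lemma cut_cell_sem n (a b : 'rV[R]_n.+1) c :
  cell_within a b c -> meets_box a b c ->
  forall x, csem (cut_cell a b c) x <-> box a b x /\ csem c x.
Proof.
elim: n a b c => [|k IH] a b c.
- case: c => [p|u v] _ Hne x /=; rewrite box_row1.
  + case: Hne => y [/box_row1 Hb /= Hy]; split=> [Hx|[]//].
    by rewrite Hx -Hy.
  + have E1 := ltE_maxE (a 0 0) u (x 0 0); have E2 := ltE_minE (b 0 0) v (x 0 0).
    simpl in E1, E2 |- *; tauto.
- case=> Ht Hw Hne x.
  have Hne1 : meets_box (projv a) (projv b) c.1.
    by case: Hne => y [/boxS [Hb _] /csemS [Hy _]]; exists (projv y).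
  have E := shape_sem_cut (lastc x) Ht.
  rewrite csemS IH // boxS; split.
  + by case=> [[Hb Hc] /(E _ Hb)]; rewrite csemS; tauto.
  + by case=> [[Hb Hl] /csemS [Hc Hs]]; split=> //; apply/E.
Qed.

Lemma fiber_in_box k (a b : 'rV[R]_k.+2) (c : cdesc R k.+1) z :
  cell_within a b c -> cvalid c -> ltR (lastc a) (lastc b) ->
  box (projv a) (projv b) z -> csem c.1 z ->
  exists t, ltR (lastc a) t /\ ltR t (lastc b) /\ shape_sem c.2 z t.
Proof.
case: c => c1 s [Hs _] /cvalidS [_ Hv] Hab Hz Hc /=.
move: Hs Hv; set la := lastc a; set lb := lastc b; rewrite /= in Hc.
case: s => [f|f g] /= Hs Hv; first by have [H1 H2] := Hs _ Hz; exists (evl f z).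
move/(_ _ _ erefl _ Hc): Hv; case: Hs => Hf Hg.
case: f Hf => [|f|] /= Hf; case: g Hg => [|g|] /= Hg //= H.
- have [H1 H2] := Hg _ Hz; have [t [T1 T2]] := ltR_midpoint H1.
  by exists t; do !split => //; apply: ltR_trans T2 H2.
- by have [t [T1 T2]] := ltR_midpoint Hab; exists t.
- have [H1 H2] := Hf _ Hz; have [H3 H4] := Hg _ Hz.
  have [t [T1 T2]] := ltR_midpoint H.
  by exists t; do !split => //; [apply: ltR_trans H1 T1|apply: ltR_trans T2 H4].
- have [H1 H2] := Hf _ Hz; have [t [T1 T2]] := ltR_midpoint H2.
  by exists t; do !split => //; apply: ltR_trans H1 T1.
Qed.

Lemma lift_in_box k (a b : 'rV[R]_k.+2) (c : cdesc R k.+1) z :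
  cell_within a b c -> cvalid c -> ltR (lastc a) (lastc b) ->
  box (projv a) (projv b) z -> csem c.1 z ->
  exists x, [/\ box a b x, csem c x & projv x = z].
Proof.
move=> Hw Hv Hab Hz Hc; have [t [T1 [T2 T3]]] := fiber_in_box Hw Hv Hab Hz Hc.
exists (rcons_row z t); split; last exact: projv_rcons_row.
- by apply/boxS; rewrite projv_rcons_row lastc_rcons_row.
- by apply/csemS; rewrite projv_rcons_row lastc_rcons_row.
Qed.

Lemma meets_boxS k (a b : 'rV[R]_k.+2) (c : cdesc R k.+1) :
  cell_within a b c -> cvalid c -> ltR (lastc a) (lastc b) ->
  meets_box a b c <-> meets_box (projv a) (projv b) c.1.
Proof.
move=> Hw Hv Hab; split; first by case=> y [/boxS [Hb _] /csemS [Hy _]]; exists (projv y).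
by case=> z [Hz Hc]; have [x [? ? _]] := lift_in_box Hw Hv Hab Hz Hc; exists x.
Qed.

Lemma cut_cell_valid n (a b : 'rV[R]_n.+1) c :
  cell_within a b c -> cvalid c -> meets_box a b c -> cvalid (cut_cell a b c).
Proof.
elim: n a b c => [|k IH] a b c.
- case: c => [p|u v] //= _ _ [y [/box_row1 Hb /= [Hu Hv]]].
  apply: (@ltE_trans_fin _ _ (y 0 0)); [apply/ltE_maxE|apply/ltE_minE]; tauto.
- move=> Hw Hv Hne; case: (Hw) => Hs Hw1; case/cvalidS: (Hv) => Hv1 _.
  have Hab : ltR (lastc a) (lastc b).
    by case: Hne => y [/boxS [_ [H1 H2]] _]; apply: ltR_trans H1 H2.
  have Hne1 := iffLR (meets_boxS Hw Hv Hab) Hne.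
  apply/cvalidS; split; first exact: IH.
  move=> f' g' /= E z /(cut_cell_sem Hw1 Hne1) [Hz Hc].
  have [t [T1 [T2 T3]]] := fiber_in_box Hw Hv Hab Hz Hc.
  have := iffRL (shape_sem_cut t Hs Hz) (conj (conj T1 T2) T3).
  by rewrite E /= => -[]; apply: ltE_trans_fin.
Qed.


(** * Decomposing the complement of a box *)

Definition meets_boxb n (a b : 'rV[R]_n.+1) (c : cdesc R n) : bool :=
  if excluded_middle_informative (meets_box a b c) then true else false.
Lemma meets_boxP n (a b : 'rV[R]_n.+1) c : meets_boxb a b c <-> meets_box a b c.
Proof. by rewrite /meets_boxb; case: excluded_middle_informative. Qed.

Definition box_cells n (a b : 'rV[R]_n.+1) (cs : seq (cdesc R n)) :=
  map (cut_cell a b) (filter (meets_boxb a b) cs).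

Lemma In_box_cells n (a b : 'rV[R]_n.+1) cs e :
  In e (box_cells a b cs) <-> exists c, [/\ e = cut_cell a b c, In c cs & meets_box a b c].
Proof.
rewrite In_map_iff; split.
- by case=> c [<- /In_filter [H1 /meets_boxP H2]]; exists c.
- case=> c [-> H1 H2]; exists c; split=> //.
  by apply/In_filter; split=> //; apply/meets_boxP.
Qed.

Lemma box_cells_sub_box n (a b : 'rV[R]_n.+1) cs e x :
  (forall c, In c cs -> cell_within a b c) ->
  In e (box_cells a b cs) -> csem e x -> box a b x.
Proof. by move=> W /In_box_cells [c [-> Hc Hne]] /(cut_cell_sem (W _ Hc) Hne) []. Qed.

Lemma box_cells_base k (a b : 'rV[R]_k.+2) (cs : seq (cdesc R k.+1)) :
  (forall c, In c cs -> cell_within a b c /\ cvalid c) -> ltR (lastc a) (lastc b) ->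
  forall e, In e (map (fun c : cdesc R k.+1 => c.1) (box_cells a b cs)) <->
            In e (box_cells (projv a) (projv b) (map (fun c : cdesc R k.+1 => c.1) cs)).
Proof.
move=> W Hab e; rewrite In_map_iff In_box_cells; split.
- case=> d [<- /In_box_cells [c [-> Hc Hne]]]; exists c.1; split=> //.
  + exact: In_map.
  + by case: (W _ Hc) => w v; apply/(meets_boxS w v Hab).
- case=> c1 [-> /In_map_iff [c [<- Hc]] Hne].
  exists (cut_cell a b c); split=> //; apply/In_box_cells; exists c; split=> //.
  by case: (W _ Hc) => w v; apply/(meets_boxS w v Hab).
Qed.

(* Over a cut cell [e] of the base, the complement of the box in the fibre is
   split by the two horizontal levels [la] and [lb]. *)
Definition slab_cells k (e : cdesc R k) (la lb : R) : seq (cdesc R k.+1) :=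
  [:: (e, SBand NInf (Fin (const_lin k.+1 la))); (e, SGraph (const_lin k.+1 la));
      (e, SGraph (const_lin k.+1 lb)); (e, SBand (Fin (const_lin k.+1 lb)) PInf)].

(* Cells partitioning the complement of the box [(a, b)]: cylinders over the
   outer cells of the base, and the [slab_cells] over the cut cells of the base. *)
Fixpoint outer_cells n : 'rV[R]_n.+1 -> 'rV[R]_n.+1 -> seq (cdesc R n) -> seq (cdesc R n) :=
  match n return 'rV[R]_n.+1 -> 'rV[R]_n.+1 -> seq (cdesc R n) -> seq (cdesc R n) with
  | 0 => fun a b _ => [:: C1Int NInf (Fin (a 0 0)); C1Pt (a 0 0); C1Pt (b 0 0);
                         C1Int (Fin (b 0 0)) PInf]
  | k.+1 => fun a b cs =>
      let base := map (fun c : cdesc R k.+1 => c.1) cs in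
      map (fun e => (e, SBand NInf PInf) : cdesc R k.+1)
          (outer_cells (projv a) (projv b) base) ++
      flatten (map (fun e => slab_cells e (lastc a) (lastc b))
                   (box_cells (projv a) (projv b) base))
  end.

Lemma slab_cellsP k (f : cdesc R k) la lb e :
  In e (slab_cells f la lb) -> e.1 = f /\
    forall z t, shape_sem e.2 z t ->
      [\/ e.2 = SBand NInf (Fin (const_lin k.+1 la)) /\ ltR t la,
          e.2 = SGraph (const_lin k.+1 la) /\ t = la,
          e.2 = SGraph (const_lin k.+1 lb) /\ t = lb |
          e.2 = SBand (Fin (const_lin k.+1 lb)) PInf /\ ltR lb t].
Proof.
case=> [<-|[<-|[<-|[<-|[]]]]]; split=> // z t /=; rewrite ?evl_const_lin.
- by case=> _ H; constructor 1.
- by move=> H; constructor 2.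
- by move=> H; constructor 3.
- by case=> H _; constructor 4.
Qed.

Lemma slab_cells_shape_eq k (f1 f2 : cdesc R k) la lb e1 e2 z1 z2 t :
  ltR la lb -> In e1 (slab_cells f1 la lb) -> In e2 (slab_cells f2 la lb) ->
  shape_sem e1.2 z1 t -> shape_sem e2.2 z2 t -> e1.2 = e2.2.
Proof.
move=> Hab /slab_cellsP [_ E1] /slab_cellsP [_ E2] /E1 H1 /E2 H2.
case: H1 => [] [-> T1]; case: H2 => [] [-> T2] //; subst; exfalso;
  eauto using ltR_cycle3, ltR_asym, ltR_irr.
Qed.

Lemma outer_cells_out n (a b : 'rV[R]_n.+1) cs e x :
  In e (outer_cells a b cs) -> csem e x -> ~ box a b x.
Proof.
elim: n a b cs e x => [|k IH] a b cs e x.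
- rewrite box_row1 /=; case=> [<-|[<-|[<-|[<-|[]]]]] /=.
  + by case=> _ H [H1 _]; apply: ltR_asym H H1.
  + by move=> -> [H _]; apply: ltR_irr H.
  + by move=> -> [_ H]; apply: ltR_irr H.
  + by case=> H _ [_ H1]; apply: ltR_asym H H1.
- case/In_cat.
  + case/In_map_iff=> f [<- Hf] /csemS [Hc _] /boxS [Hb _].
    exact: (IH _ _ _ _ _ Hf Hc Hb).
  + case/In_flatten=> s [/In_map_iff [f [<- Hf]] He] /csemS [_ Hs] /boxS [_ [T1 T2]].
    case/slab_cellsP: He => _ /(_ (projv x) (lastc x)) E; case/E: Hs => [] [_ T].
    * exact: ltR_asym T T1.
    * by rewrite T in T1; apply: ltR_irr T1.
    * by rewrite T in T2; apply: ltR_irr T2.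
    * exact: ltR_asym T T2.
Qed.

Definition partitions_outside n (a b : 'rV[R]_n.+1) (O : seq (cdesc R n)) : Prop :=
  [/\ forall e, In e O -> cvalid e,
      forall x, ~ box a b x -> exists e, In e O /\ csem e x &
      forall e1 e2 x, In e1 O -> In e2 O -> csem e1 x -> csem e2 x ->
        forall y, csem e1 y <-> csem e2 y].

Lemma cells_partition_box_outer n (a b : 'rV[R]_n.+1) (cs O : seq (cdesc R n)) :
  cells_partition cs -> (forall c, In c cs -> cell_within a b c) ->
  (forall e x, In e O -> csem e x -> ~ box a b x) -> partitions_outside a b O ->
  cells_partition (box_cells a b cs ++ O).
Proof.
case=> CV CC CP W OO [OV OC OP]; split.
- move=> e /In_cat [/In_box_cells [c [-> Hc Hne]]|/OV //].
  exact: cut_cell_valid (W _ Hc) (CV _ Hc) Hne.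
- move=> x; case: (excluded_middle_informative (box a b x)) => Hb.
  + case: (CC x) => c [Hc Hx]; have Hne : meets_box a b c by exists x.
    exists (cut_cell a b c); split; last exact/(cut_cell_sem (W _ Hc) Hne).
    by apply/In_cat; left; apply/In_box_cells; exists c.
  + by case: (OC _ Hb) => e [He Hx]; exists e; split=> //; apply/In_cat; right.
- move=> e1 e2 x /In_cat [H1|H1] /In_cat [H2|H2] X1 X2.
  + case/In_box_cells: H1 X1 => c1 [-> Hc1 Hn1].
    case/In_box_cells: H2 X2 => c2 [-> Hc2 Hn2].
    have E1 := cut_cell_sem (W _ Hc1) Hn1; have E2 := cut_cell_sem (W _ Hc2) Hn2.
    move=> /E2 [_ Y2] /E1 [_ Y1] y.
    by rewrite E1 E2 (CP _ _ _ Hc1 Hc2 Y1 Y2 y).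
  + by case: (OO _ _ H2 X2); apply: box_cells_sub_box W H1 X1.
  + by case: (OO _ _ H1 X1); apply: box_cells_sub_box W H2 X2.
  + exact: OP H1 H2 X1 X2.
Qed.

Lemma outer_cells_partition0 (a b : 'rV[R]_1) (cs : seq (cdesc R 0)) :
  is_box a b -> partitions_outside a b (outer_cells a b cs).
Proof.
move=> Hbox; have Hab : ltR (a 0 0) (b 0 0) by apply: Hbox.
split; first by move=> e /= [<-|[<-|[<-|[<-|[]]]]].
- move=> x; rewrite box_row1 => Hb.
  case: (ltR_total (x 0 0) (a 0 0)) => [E|[H|H]].
  + by exists (C1Pt (a 0 0)); split; [right; left|].
  + by exists (C1Int NInf (Fin (a 0 0))); split; [left|].
  + case: (ltR_total (x 0 0) (b 0 0)) => [E|[H'|H']].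
    * by exists (C1Pt (b 0 0)); split; [right; right; left|].
    * by case: Hb.
    * by exists (C1Int (Fin (b 0 0)) PInf); split; [right; right; right; left|].
- move=> e1 e2 x /= H1 H2; case: H1 => [<-|[<-|[<-|[<-|[]]]]];
  case: H2 => [<-|[<-|[<-|[<-|[]]]]] //= X1 X2 y; try tauto; exfalso;
  move: X1 X2 Hab; move: (x 0 0) (a 0 0) (b 0 0) => t u v X1 X2 Hab;
  repeat match goal with H : _ /\ _ |- _ => case: H => ? ? end;
  subst; eauto using ltR_cycle3, ltR_asym, ltR_irr.
Qed.


Section OuterCellsS.
Variables (k : nat) (a b : 'rV[R]_k.+2) (cs : seq (cdesc R k.+1)).
Let base := map (fun c : cdesc R k.+1 => c.1) cs.
Let pa := projv a.
Let pb := projv b.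
Hypothesis base_partition : cells_partition (box_cells pa pb base ++ outer_cells pa pb base).
Hypothesis base_within : forall c, In c base -> cell_within pa pb c.
Hypothesis lt_last : ltR (lastc a) (lastc b).

Lemma In_outer_cellsS e :
  In e (outer_cells a b cs) ->
  (exists f, e = (f, SBand NInf PInf) /\ In f (outer_cells pa pb base)) \/
  (exists f, In e (slab_cells f (lastc a) (lastc b)) /\ In f (box_cells pa pb base)).
Proof.
case/In_cat => [/In_map_iff [f [<- Hf]]|/In_flatten [s [/In_map_iff [f [<- Hf]] He]]].
- by left; exists f.
- by right; exists f.
Qed.

Lemma outer_cellsS_valid e : In e (outer_cells a b cs) -> cvalid e.
Proof.
case: base_partition => PV _ _.
case/In_outer_cellsS => [[f [-> Hf]]|[f [He Hf]]].
- apply/cvalidS; split; last by move=> f' g' [<- <-].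
  by apply: PV; apply/In_cat; right.
- have Vf : cvalid f by apply: PV; apply/In_cat; left.
  by case: He => [<-|[<-|[<-|[<-|[]]]]]; apply/cvalidS; split=> // f' g' //= [<- <-].
Qed.

Lemma outer_cellsS_cover x : ~ box a b x -> exists e, In e (outer_cells a b cs) /\ csem e x.
Proof.
move=> Hb; case: base_partition => _ PC _.
case: (PC (projv x)) => f [/In_cat [Hf|Hf] Xf]; last first.
  exists (f, SBand NInf PInf); split; last exact/csemS.
  by apply/In_cat; left; apply: (In_map (fun e => (e, SBand NInf PInf) : cdesc R k.+1)).
have Hslab s : In (f, s) (slab_cells f (lastc a) (lastc b)) ->
    shape_sem s (projv x) (lastc x) -> exists e, In e (outer_cells a b cs) /\ csem e x.
  move=> Hs Ss; exists (f, s); split; last exact/csemS.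
  apply/In_cat; right; apply/In_flatten; exists (slab_cells f (lastc a) (lastc b)).
  by split=> //; apply: (In_map (fun e => slab_cells e (lastc a) (lastc b)) Hf).
case: (ltR_total (lastc x) (lastc a)) => [E|[H|H]].
- by apply: (Hslab (SGraph (const_lin k.+1 (lastc a)))); [right; left|rewrite /= evl_const_lin].
- by apply: (Hslab (SBand NInf (Fin (const_lin k.+1 (lastc a))))); [left|rewrite /= evl_const_lin].
case: (ltR_total (lastc x) (lastc b)) => [E|[H'|H']].
- apply: (Hslab (SGraph (const_lin k.+1 (lastc b)))); first by right; right; left.
  by rewrite /= evl_const_lin.
- by case: Hb; apply/boxS; split=> //; apply: box_cells_sub_box base_within Hf Xf.
- apply: (Hslab (SBand (Fin (const_lin k.+1 (lastc b))) PInf)).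
    by right; right; right; left.
  by rewrite /= evl_const_lin.
Qed.

Lemma outer_cellsS_disjoint e1 e2 x :
  In e1 (outer_cells a b cs) -> In e2 (outer_cells a b cs) -> csem e1 x -> csem e2 x ->
  forall y, csem e1 y <-> csem e2 y.
Proof.
case: base_partition => _ _ PP.
move=> /In_outer_cellsS H1 /In_outer_cellsS H2 /csemS [X1 S1] /csemS [X2 S2] y.
have same_base f1 f2 :
    In f1 (box_cells pa pb base ++ outer_cells pa pb base) ->
    In f2 (box_cells pa pb base ++ outer_cells pa pb base) ->
    e1.1 = f1 -> e2.1 = f2 -> e1.2 = e2.2 -> csem e1 y <-> csem e2 y.
  move=> F1 F2 E1 E2 E3; rewrite !csemS E3.
  by rewrite E1 in X1 *; rewrite E2 in X2 *; rewrite (PP _ _ _ F1 F2 X1 X2 (projv y)).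
case: H1 => [[f1 [E1 F1]]|[f1 [Z1 F1]]]; case: H2 => [[f2 [E2 F2]]|[f2 [Z2 F2]]].
- by apply: (same_base f1 f2); try (apply/In_cat; right); subst.
- exfalso; subst e1; case/slab_cellsP: Z2 => E _; rewrite E in X2.
  exact: (outer_cells_out F1 X1 (box_cells_sub_box base_within F2 X2)).
- exfalso; subst e2; case/slab_cellsP: Z1 => E _; rewrite E in X1.
  exact: (outer_cells_out F2 X2 (box_cells_sub_box base_within F1 X1)).
- case/slab_cellsP: (Z1) => E1 _; case/slab_cellsP: (Z2) => E2 _.
  apply: (same_base f1 f2) => //; try by apply/In_cat; left.
  exact: slab_cells_shape_eq lt_last Z1 Z2 S1 S2.
Qed.

Lemma outer_cells_partitionS : partitions_outside a b (outer_cells a b cs).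
Proof.
split; [exact: outer_cellsS_valid|exact: outer_cellsS_cover|exact: outer_cellsS_disjoint].
Qed.

End OuterCellsS.

Lemma cells_partition_eq n (l1 l2 : seq (cdesc R n)) :
  (forall c, In c l1 <-> In c l2) -> cells_partition l1 -> cells_partition l2.
Proof.
move=> E [H1 H2 H3]; split.
- by move=> c /E; apply: H1.
- by move=> x; case: (H2 x) => c [/E ? ?]; exists c.
- by move=> c1 c2 x /E ? /E ?; apply: H3.
Qed.

Lemma lindec_eq n (l1 l2 : seq (cdesc R n)) :
  (forall c, In c l1 <-> In c l2) -> lindec l1 -> lindec l2.
Proof.
elim: n l1 l2 => [|k IH] l1 l2 E /=; first exact: cells_partition_eq.
case=> H1 H2; split; first exact: cells_partition_eq H1.
by apply: IH H2 => c; rewrite !In_map_iff; split; case=> d [<- /E ?]; exists d.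
Qed.

Lemma lindec_partition n (l : seq (cdesc R n)) : lindec l -> cells_partition l.
Proof. by case: n l => [|k] l //= []. Qed.

Lemma lindec_box_outer n (a b : 'rV[R]_n.+1) (cs : seq (cdesc R n)) :
  is_box a b -> lindec cs -> (forall c, In c cs -> cell_within a b c) ->
  lindec (box_cells a b cs ++ outer_cells a b cs).
Proof.
elim: n a b cs => [|k IH] a b cs Hbox.
- move=> /= HP W; apply: cells_partition_box_outer => //.
  + exact: outer_cells_out.
  + exact: outer_cells_partition0.
- move=> [HP HL0] W; set base := map (fun c : cdesc R k.+1 => c.1) cs.
  have W0 c : In c base -> cell_within (projv a) (projv b) c.
    by case/In_map_iff=> d [<- Hd]; case: (W _ Hd).
  have WV c : In c cs -> cell_within a b c /\ cvalid c.
    by move=> Hc; split; [exact: W|case: HP => V _ _; exact: V].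
  case/is_boxS: Hbox => Hbox0 Hab.
  have IHk := IH _ _ base Hbox0 HL0 W0.
  split.
    apply: cells_partition_box_outer => //; first exact: outer_cells_out.
    exact: outer_cells_partitionS (lindec_partition IHk) W0 Hab.
  apply: lindec_eq IHk => e; rewrite In_map_iff In_cat; split.
  + case=> [He|He]; last first.
      exists (e, SBand NInf PInf); split=> //; apply/In_cat; right; apply/In_cat; left.
      exact: (In_map (fun e => (e, SBand NInf PInf) : cdesc R k.+1)).
    have [d [<- Hd]] := iffLR (In_map_iff _ _ _) (iffRL (box_cells_base WV Hab e) He).
    by exists d; split=> //; apply/In_cat; left.
  + case=> d [<- /In_cat [Hd|Hd]].
    * by left; apply/(box_cells_base WV Hab); apply: (In_map (fun c : cdesc R k.+1 => c.1) Hd).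
    * case/In_outer_cellsS: Hd => [[f [-> Hf]]|[f [Z Hf]]]; first by right.
      by case/slab_cellsP: Z => ->; left.
Qed.


(** * Special decompositions cut by a box *)

Definition lindec_witness n (cs : seq (cdesc R n)) (Y : 'rV[R]_n.+1 -> Prop)
    (C : seq (cdesc R n)) : Prop :=
  [/\ lindec C,
      forall c', In c' C -> (forall x, csem c' x -> Y x) \/ (forall x, csem c' x -> ~ Y x),
      forall c, In c cs -> [/\ In c C, exists x, csem c x & forall x, csem c x -> Y x] &
      forall c', In c' C -> (exists x, csem c' x /\ Y x) -> In c' cs].

Lemma lindec_witness_box n (a b : 'rV[R]_n.+1) cs Y C :
  is_box a b -> lindec_witness cs Y C -> (forall c, In c C -> cell_within a b c) ->
  lindec_witness (box_cells a b cs) (fun x => box a b x /\ Y x)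
    (box_cells a b C ++ outer_cells a b C).
Proof.
move=> Hbox [HC H2 H3 H4] W; split; first exact: lindec_box_outer.
- move=> c' /In_cat [/In_box_cells [c [-> Hc Hne]]|Ho].
  + by case: (H2 _ Hc) => HY; [left|right] => x /(cut_cell_sem (W _ Hc) Hne) [Hb Hx];
      [split=> //; apply: HY|case=> _; apply: HY].
  + by right=> x Hx [Hb _]; apply: outer_cells_out Ho Hx Hb.
- move=> c /In_box_cells [c0 [-> Hc0 Hne]]; case: (H3 _ Hc0) => HC0 _ HY0.
  have E := cut_cell_sem (W _ HC0) Hne; split.
  + by apply/In_cat; left; apply/In_box_cells; exists c0.
  + by case: (Hne) => x Hx; exists x; apply/E.
  + by move=> x /E [Hb Hx]; split=> //; apply: HY0.
- move=> c' /In_cat [/In_box_cells [c [-> Hc Hne]]|Ho] [x [Hx [Hb HY]]].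
  + move/(cut_cell_sem (W _ Hc) Hne): Hx => [_ Hx].
    by apply/In_box_cells; exists c; split=> //; apply: H4 => //; exists x.
  + by case: (outer_cells_out Ho Hx Hb).
Qed.

Lemma lindec_witness_eq n (cs1 cs2 : seq (cdesc R n)) Y1 Y2 C :
  (forall c, In c cs1 <-> In c cs2) -> (forall x, Y1 x <-> Y2 x) ->
  lindec_witness cs1 Y1 C -> lindec_witness cs2 Y2 C.
Proof.
move=> E EY [H1 H2 H3 H4]; split=> //.
- move=> c' Hc'; case: (H2 _ Hc') => H; [left|right] => x Hx;
    [apply/EY|rewrite -EY]; exact: H.
- by move=> c /E Hc; case: (H3 _ Hc) => ? ? H; split=> // x Hx; apply/EY; apply: H.
- move=> c' Hc' [x [Hx HY]]; apply/E; apply: H4 => //.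
  by exists x; split=> //; apply/EY.
Qed.

Lemma special_eq n (cs1 cs2 : seq (cdesc R n)) Y1 Y2 :
  (forall c, In c cs1 <-> In c cs2) -> (forall x, Y1 x <-> Y2 x) ->
  special cs1 Y1 -> special cs2 Y2.
Proof.
elim: n cs1 cs2 Y1 Y2 => [|k IH] cs1 cs2 Y1 Y2 E EY.
- by case=> C HC; exists C; apply: lindec_witness_eq E EY HC.
- case=> [[C HC] Hsp Hc2 Hc3]; split.
  + by exists C; apply: lindec_witness_eq E EY HC.
  + apply: IH Hsp.
    * by move=> c; rewrite !In_map_iff; split; case=> d [<- /E ?]; exists d.
    * by move=> z; split; case=> x [/EY ? ?]; exists x.
  + by move=> c1 c2 c3 f g /E H1 /E H2 /E H3; apply: Hc2.
  + by move=> c1 c2 h f g /E H1 /E H2; apply: Hc3.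
Qed.

Lemma closure_sub m (S T : 'rV[R]_m -> Prop) x :
  (forall y, S y -> T y) -> closure S x -> closure T x.
Proof.
by move=> H Cl a b Hx; case: (Cl a b Hx) => y [Sy Hy]; exists y; split=> //; apply: H.
Qed.

Section BoxCellsS.
Variables (k : nat) (a b : 'rV[R]_k.+2) (cs : seq (cdesc R k.+1)).
Hypothesis cs_within : forall c, In c cs -> cell_within a b c /\ cvalid c.
Hypothesis lt_last : ltR (lastc a) (lastc b).

Lemma cut_cell_base_sub c x :
  In c cs -> meets_box a b c -> csem (cut_cell a b c).1 x -> csem c.1 x.
Proof.
move=> Hc Hne; case: (cs_within Hc) => w v.
have Hne1 := iffLR (meets_boxS w v lt_last) Hne.
by case: w => _ w1 /(cut_cell_sem w1 Hne1) [].
Qed.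

Lemma special_cond2_box_cells : special_cond2 cs -> special_cond2 (box_cells a b cs).
Proof.
move=> H2 c1 c2 c3 f g.
move=> /In_box_cells [d1 [-> D1 _]] /In_box_cells [d2 [-> D2 _]] /In_box_cells [d3 [-> D3 N3]].
case: d1 D1 => d1 [f1|f1 g1] D1 //= [<-]; case: d2 D2 => d2 [f2|f2 g2] D2 //= [<-].
have S3 := cut_cell_base_sub D3 N3.
by case: (H2 _ _ d3 f1 f2 D1 D2 D3 erefl erefl) => [H|[H|H]];
  [left|right; left|right; right] => x /S3; apply: H.
Qed.

Lemma special_cond3_box_cells : special_cond3 cs -> special_cond3 (box_cells a b cs).
Proof.
move=> H3 c1 c2 h f' g' /In_box_cells [d1 [-> D1 N1]] /In_box_cells [d2 [-> D2 N2]].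
case: d1 D1 N1 => d1 [h1|??] D1 N1 //= [<-].
case: d2 D2 N2 => d2 [??|f g] D2 N2 //= [<- <-] [x [Cl1 Cl2 Lf Lg]].
apply: (H3 _ _ h1 f g D1 D2 erefl erefl); exists x; split.
- by apply: (closure_sub _ Cl1) => y /(cut_cell_base_sub D1 N1).
- by apply: (closure_sub _ Cl2) => y /(cut_cell_base_sub D2 N2).
- by move: Lf; case: (f).
- by move: Lg; case: (g).
Qed.

End BoxCellsS.

Fixpoint adapted_box n :
    'rV[R]_n.+1 -> 'rV[R]_n.+1 -> seq (cdesc R n) -> ('rV[R]_n.+1 -> Prop) -> Prop :=
  match n return 'rV[R]_n.+1 -> 'rV[R]_n.+1 -> seq (cdesc R n) ->
                 ('rV[R]_n.+1 -> Prop) -> Prop with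
  | 0 => fun a b cs Y =>
      exists C, lindec_witness cs Y C /\ (forall c, In c C -> cell_within a b c)
  | k.+1 => fun a b cs Y =>
      (exists C, lindec_witness cs Y C /\ (forall c, In c C -> cell_within a b c)) /\
      adapted_box (projv a) (projv b) (map (fun c : cdesc R k.+1 => c.1) cs) (projset Y)
  end.

Lemma adapted_box_witness n (a b : 'rV[R]_n.+1) cs Y :
  adapted_box a b cs Y ->
  exists C, lindec_witness cs Y C /\ (forall c, In c C -> cell_within a b c).
Proof. by case: n a b cs Y => [|k] a b cs Y //= []. Qed.

Lemma special_box_cells n (cs : seq (cdesc R n)) Y (a b : 'rV[R]_n.+1) :
  special cs Y -> is_box a b -> adapted_box a b cs Y ->
  special (box_cells a b cs) (fun x => box a b x /\ Y x).
Proof.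
elim: n cs Y a b => [|k IH] cs Y a b.
  by move=> _ Hbox [C [HW W]]; exists (box_cells a b C ++ outer_cells a b C);
    apply: lindec_witness_box.
move=> [_ Hsp Hc2 Hc3] Hbox [[C [HW W]] Had]; case/is_boxS: (Hbox) => Hbox0 Hab.
case: (HW) => HC _ W3 W4; have [CV Cov _] := lindec_partition HC.
have WV c : In c cs -> cell_within a b c /\ cvalid c.
  by move=> Hc; case: (W3 _ Hc) => HcC _ _; split; [apply: W|apply: CV].
split.
- by exists (box_cells a b C ++ outer_cells a b C); apply: lindec_witness_box.
- apply: special_eq (IH _ _ _ _ Hsp Hbox0 Had).
  + by move=> e; rewrite (box_cells_base WV Hab).
  + move=> z; split; last by case=> x [[Hb HY] <-]; split; [case/boxS: Hb|exists x].
    case=> Hz [y [Hy Ey]]; case: (Cov y) => c [HcC Yc].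
    have Hc : In c cs by apply: W4 => //; exists y.
    have [_ _ HY] := W3 _ Hc; have [w v] := WV _ Hc.
    have Hc1 : csem c.1 z by rewrite -Ey; case/csemS: Yc.
    have [x [Hb Hx Ex]] := lift_in_box w v Hab Hz Hc1.
    by exists x; split=> //; split=> //; apply: HY.
- exact: special_cond2_box_cells.
- exact: special_cond3_box_cells.
Qed.


(** * Choosing the box *)

Lemma leR_scale_between (l : L) (p q t : R) : ltR p t -> ltR t q ->
  leR (if posL l then l *: p else l *: q) (l *: t) /\
  leR (l *: t) (if posL l then l *: q else l *: p).
Proof.
move=> H1 H2; case H: (posL l).
  by split; right; rewrite /Defs.ltR -scalerBr; apply: posR_scale.
case: (posL_total l) => [->|[H'|H']]; first by rewrite !scale0r; split; left.
  by rewrite H in H'.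
split; right; rewrite /Defs.ltR.
- by rewrite -opprB -scalerBr -scaleNr; apply: posR_scale.
- by rewrite -opprB -scalerBr -scaleNr; apply: posR_scale.
Qed.

Lemma evl_bounded_on_box m (f : lin R m) (pa pb : 'rV[R]_m) :
  exists lo up, forall x, box pa pb x -> leR lo (evl f x) /\ leR (evl f x) up.
Proof.
exists (\sum_i (if posL (f.1 0 i) then f.1 0 i *: pa 0 i else f.1 0 i *: pb 0 i) + f.2).
exists (\sum_i (if posL (f.1 0 i) then f.1 0 i *: pb 0 i else f.1 0 i *: pa 0 i) + f.2).
move=> x Hx; split; apply: leR_add (leR_refl _); apply: leR_sum => i;
  have [H1 H2] := Hx i; have [T1 T2] := leR_scale_between (f.1 0 i) H1 H2; done.
Qed.

Lemma evl_seq_bounded_on_box m (fs : seq (lin R m)) (pa pb : 'rV[R]_m) t1 t2 :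
  exists lo up, [/\ leR lo t1, leR t2 up &
    forall f, In f fs -> forall x, box pa pb x -> leR lo (evl f x) /\ leR (evl f x) up].
Proof.
elim: fs => [|f fs [lo [up [H1 H2 H3]]]]; first by exists t1, t2; split=> //; left.
have [lo' [up' Hf]] := evl_bounded_on_box f pa pb.
have [l [M1 M2]] := exists_leR_lb lo lo'; have [u [X1 X2]] := exists_leR_ub up up'.
exists l, u; split; [exact: leR_trans M1 H1|exact: leR_trans H2 X1|].
move=> g [<-|Hg] x Hx.
- by have [A B] := Hf x Hx; split; [apply: leR_trans M2 A|apply: leR_trans B X2].
- by have [A B] := H3 g Hg x Hx; split; [apply: leR_trans M1 A|apply: leR_trans B X1].
Qed.

Definition ext_lins m (f : ext (lin R m)) : seq (lin R m) :=
  if f is Fin g then [:: g] else [::].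
Definition shape_lins m (s : shape R m) : seq (lin R m) :=
  match s with SGraph f => [:: f] | SBand f g => ext_lins f ++ ext_lins g end.

Lemma shape_within_lins m (pa pb : 'rV[R]_m) la lb s :
  (forall f, In f (shape_lins s) -> lin_within pa pb la lb f) -> shape_within pa pb la lb s.
Proof.
case: s => [f|f g] /= H; first by apply: H; left.
split.
- by case: f H => [|f|] //= H; apply: H; left.
- by case: g H => [|g|] //= H; apply: H; apply/In_cat; right; left.
Qed.

(* Widening the non-strict bounds by [e > 0] makes them strict. *)
Lemma shapes_within m (sl : seq (shape R m)) (pa pb : 'rV[R]_m) t1 t2 e :
  posR e -> exists la lb, [/\ ltR la t1, ltR t2 lb &
    forall s, In s sl -> shape_within pa pb la lb s].
Proof.
move=> He; set fs := flatten (map (@shape_lins m) sl).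
have [lo [up [H1 H2 H3]]] := evl_seq_bounded_on_box fs pa pb t1 t2.
exists (lo - e), (up + e); split; [exact: ltR_subr_pos|exact: ltR_addr_pos|].
move=> s Hs; apply: shape_within_lins => f Hf x Hx.
have Hfs : In f fs by apply/In_flatten; exists (shape_lins s); split=> //; apply: In_map.
by have [A B] := H3 f Hfs x Hx; split; [apply: ltR_subr_pos|apply: ltR_addr_pos].
Qed.

Lemma cell_within_rcons k (a0 b0 : 'rV[R]_k.+1) la lb (c : cdesc R k.+1) :
  shape_within a0 b0 la lb c.2 -> cell_within a0 b0 c.1 ->
  cell_within (rcons_row a0 la) (rcons_row b0 lb) c.
Proof. by move=> H1 H2 /=; rewrite !projv_rcons_row !lastc_rcons_row. Qed.

Lemma exists_adapted_box n (cs : seq (cdesc R n)) Y :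
  special cs Y -> forall (extra : seq (cdesc R n)) (a1 b1 : 'rV[R]_n.+1),
  is_box a1 b1 -> exists a b, [/\ is_box a b,
    forall x, box a1 b1 x -> box a b x,
    forall c, In c extra -> cell_within a b c & adapted_box a b cs Y].
Proof.
elim: n cs Y => [|k IH] cs Y.
  by move=> [C HC] extra a1 b1 Hb1; exists a1, b1; split=> //; exists C.
move=> [[C HW] Hsp _ _] extra a1 b1 /is_boxS [Hb10 Hab1].
set Cs := extra ++ C.
have [a0 [b0 [Hb0 Hsub0 W0 Had0]]] :=
  IH _ _ Hsp (map (fun c : cdesc R k.+1 => c.1) Cs) _ _ Hb10.
have [la [lb [T1 T2 TW]]] :=
  shapes_within (map (fun c : cdesc R k.+1 => c.2) Cs) a0 b0 (lastc a1) (lastc b1) Hab1.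
have W c : In c Cs -> cell_within (rcons_row a0 la) (rcons_row b0 lb) c.
  move=> Hc; apply: cell_within_rcons.
  + exact: TW (In_map (fun c : cdesc R k.+1 => c.2) Hc).
  + exact: W0 (In_map (fun c : cdesc R k.+1 => c.1) Hc).
exists (rcons_row a0 la), (rcons_row b0 lb); split.
- apply/is_boxS; rewrite !projv_rcons_row !lastc_rcons_row; split=> //.
  exact: ltR_trans T1 (ltR_trans Hab1 T2).
- move=> x /boxS [Hx [H1 H2]]; apply/boxS; rewrite !projv_rcons_row !lastc_rcons_row.
  by split; [apply: Hsub0|split; [apply: ltR_trans T1 H1|apply: ltR_trans H2 T2]].
- by move=> c Hc; apply: W; apply/In_cat; left.
- split; last by rewrite !projv_rcons_row.
  by exists C; split=> // c Hc; apply: W; apply/In_cat; right.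
Qed.

End BoxCut.

Unset Implicit Arguments.

Theorem mainTheorem12 (L : unitRingType) (posL : pred L)
  (R : lmodType L) (posR : pred R)
  (HL : ordered_division_ring posL) (HR : ordered_vspace posL posR)
  (n : nat) (Y : 'rV[R]_n.+1 -> Prop) (cs : seq (cdesc R n))
  (Hcs : special posR cs Y)
  (a1 b1 : 'rV[R]_n.+1) (HB1 : is_box posR a1 b1) :
  exists a b : 'rV[R]_n.+1,
    [/\ is_box posR a b,
        (forall x, box posR a1 b1 x -> box posR a b x) &
        exists ds : seq (cdesc R n),
          [/\ special posR ds (fun x => box posR a b x /\ Y x),
              (forall d, In d ds -> exists c, In c cs /\
                  forall x, csem posR d x <-> (box posR a b x /\ csem posR c x)) &
              (forall c, In c cs -> (exists x, box posR a b x /\ csem posR c x) ->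
                  exists d, In d ds /\
                  forall x, csem posR d x <-> (box posR a b x /\ csem posR c x))]].
Proof.
have [a [b [Hbox Hsub _ Had]]] := exists_adapted_box HL HR Hcs [::] HB1.
have [C [[_ _ Hwit _] W]] := adapted_box_witness Had.
have cut_sem c : In c cs -> meets_box posR a b c ->
    forall x, csem posR (cut_cell posR a b c) x <-> box posR a b x /\ csem posR c x.
  by move=> Hc; case: (Hwit _ Hc) => HcC _ _; exact: (cut_cell_sem HR (W _ HcC)).
exists a, b; split=> //; exists (box_cells posR a b cs); split.
- exact: (special_box_cells HL HR Hcs Hbox Had).
- by move=> d /In_box_cells [c [-> Hc Hne]]; exists c; split=> //; apply: cut_sem.
- move=> c Hc Hne; exists (cut_cell posR a b c); split; last exact: cut_sem.
  by apply/In_box_cells; exists c.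
Qed.
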